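(* Let $\tilde W$ be the affine Coxeter group of type $\tilde G_2$ (Coxeter generators $r_1,r_2,r_3$ with $(r_1r_2)^6=1$, $(r_2r_3)^3=1$, $(r_1r_3)^2=1$), and let $X$ be a conjugacy class of involutions of $\tilde W$. Then the commuting involution graph $\mathcal{C}(\tilde W,X)$ is disconnected.
   Context: For a group $G$ and a set $X$ of involutions of $G$, the commuting involution graph $\mathcal{C}(G,X)$ has vertex set $X$, with distinct $x,y\in X$ joined by an edge whenever $xy=yx$. *)

From mathcomp Require Import all_boot all_order all_algebra.
Set Implicit Arguments. Unset Strict Implicit. Unset Printing Implicit Defensive.
Import GRing.Theory Num.Theory.
Local Open Scope ring_scope.

(* The affine Coxeter group of type ~G2, realized (faithfully, via its
   standard geometric representation as the affine Weyl group of G2) as a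
   group of affine transformations of the coroot lattice Z^2, written as
   3x3 integer matrices [[M, t], [0, 1]] acting on column vectors (a, b, 1).
   Coordinates are w.r.t. the simple coroots a1^v (short root a1) and
   a2^v (long root a2).
   r1 = reflection in the short simple root,
   r2 = reflection in the long simple root,
   r3 = affine reflection x |-> x - (<theta,x> - 1) theta^v.
   One checks (r1 r2)^6 = (r2 r3)^3 = (r1 r3)^2 = 1. *)

Definition mx3 (l : seq (seq int)) : 'M[int]_3 :=
  \matrix_(i < 3, j < 3) nth 0 (nth [::] l i) j.

Definition r1 : 'M[int]_3 := mx3 [:: [:: -1; 1; 0]; [:: 0; 1; 0]; [:: 0; 0; 1]].
Definition r2 : 'M[int]_3 := mx3 [:: [:: 1; 0; 0]; [:: 3; -1; 0]; [:: 0; 0; 1]].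
Definition r3 : 'M[int]_3 := mx3 [:: [:: 1; -1; 1]; [:: 0; -1; 2]; [:: 0; 0; 1]].

Inductive inWG2 : 'M[int]_3 -> Prop :=
  | inWG2_1 : inWG2 1%:M
  | inWG2_r1 : inWG2 r1
  | inWG2_r2 : inWG2 r2
  | inWG2_r3 : inWG2 r3
  | inWG2_mul g h : inWG2 g -> inWG2 h -> inWG2 (g *m h)
  | inWG2_inv g : inWG2 g -> inWG2 (invmx g).

Definition is_involution (x : 'M[int]_3) : Prop :=
  inWG2 x /\ x *m x = 1%:M /\ x <> 1%:M.

Definition conj_class (x : 'M[int]_3) : 'M[int]_3 -> Prop :=
  fun y => exists2 g, inWG2 g & y = invmx g *m x *m g.

Definition cig_adj (x y : 'M[int]_3) : Prop := x <> y /\ x *m y = y *m x.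

Inductive cig_walk (X : 'M[int]_3 -> Prop) : 'M[int]_3 -> 'M[int]_3 -> Prop :=
  | cig_walk0 x : X x -> cig_walk X x x
  | cig_walkS x y z : X x -> cig_adj x y -> cig_walk X y z -> cig_walk X x z.

Definition cig_connected (X : 'M[int]_3 -> Prop) : Prop :=
  (exists x, X x) /\ forall y z, X y -> X z -> cig_walk X y z.

From mathcomp Require Import all_boot all_order all_algebra.
From mathcomp Require Import zify.
Set Implicit Arguments.
Unset Strict Implicit.
Unset Printing Implicit Defensive.
Import GRing.Theory Num.Theory.
Local Open Scope ring_scope.

(* The graph has no edges: two commuting involutions u <> v in one class of
   ~W cannot exist.  Writing elements of ~W as affine maps v |-> A v + t of
   Z^2, the linear parts A, B of u, v are commuting involutions of GL_2(Z)
   with equal trace; since (A - B)(A + B) = 0 and, by Cayley-Hamilton,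
   (A - B)^2 = 2 (1 - A B) is the scalar -det (A - B), we get B = A or
   B = -A.  If B = A, commutation forces equal translations, so u = v.  If
   B = -A, reduce mod 3: every element of ~W then stabilises the line of the
   first basis vector, and its eigenvalue there is a class function that
   changes sign with the linear part and never vanishes, a contradiction.
   Finally an involution x <> 1 is not central (the centraliser of r1, r2, r3
   consists of scalars), so the class has at least two vertices. *)

Lemma invmx_left (R : comUnitRingType) n (A B : 'M[R]_n) :
  B *m A = 1%:M -> invmx A = B.
Proof.
move=> BA; have [_ AU] := mulmx1_unit BA.
by rewrite -[LHS]mul1mx -BA -mulmxA mulmxV ?mulmx1.
Qed.

Section AffineMatrices.
Variables (R : pzRingType) (n : nat).
Implicit Types (A B : 'M[R]_n) (s t : 'cV[R]_n).

Definition affmx A t : 'M[R]_(n + 1) := block_mx A t 0 1%:M.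

Lemma mul_affmx A t B s : affmx A t *m affmx B s = affmx (A *m B) (A *m s + t).
Proof.
by rewrite /affmx mulmx_block !mulmx0 !mul0mx !addr0 add0r mulmx1 mul1mx.
Qed.

Lemma affmx1 : affmx 1%:M 0 = 1%:M.
Proof. by rewrite /affmx -scalar_mx_block. Qed.

Lemma affmx_inj A t B s : affmx A t = affmx B s -> A = B /\ t = s.
Proof. by case/eq_block_mx. Qed.

Lemma mxtrace_affmx A t : \tr (affmx A t) = \tr A + 1.
Proof. by rewrite /affmx mxtrace_block mxtrace1. Qed.

Lemma affmx_submxK (g : 'M[R]_(n + 1)) :
  dlsubmx g = 0 -> drsubmx g = 1%:M -> g = affmx (ulsubmx g) (ursubmx g).
Proof. by move=> dl dr; rewrite /affmx -{1}[g]submxK dl dr. Qed.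

Lemma affmx_sqr_eq1 A t :
  affmx A t *m affmx A t = 1%:M -> A *m A = 1%:M /\ A *m t = - t.
Proof.
by rewrite mul_affmx -affmx1 => /affmx_inj[-> /eqP]; rewrite addr_eq0 => /eqP.
Qed.

Lemma scalar_affmx A t (c : R) : affmx A t = c%:M -> affmx A t = 1%:M.
Proof.
move=> Ac; rewrite Ac; suff -> : c = 1 by [].
move: Ac; rewrite [c%:M]scalar_mx_block => /eq_block_mx[_ _ _ /matrixP/(_ 0 0)].
by rewrite !mxE eqxx !mulr1n.
Qed.

End AffineMatrices.

Lemma affmx00 (R : pzRingType) n (A : 'M[R]_n.+1) t : affmx A t 0 0 = A 0 0.
Proof.
have -> : (0 : 'I_(n.+1 + 1)) = lshift 1 0 by apply: val_inj.
by rewrite /affmx block_mxEul.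
Qed.

Lemma Cayley_Hamilton2 (R : comNzRingType) (M : 'M[R]_2) :
  M *m M = \tr M *: M - (\det M)%:M.
Proof.
have := Cayley_Hamilton M.
rewrite -[char_poly M]coefK poly_def size_char_poly rmorph_sum /=.
rewrite !big_ord_recr big_ord0 /= add0r !linearZ /= !rmorphXn /= horner_mx_X.
have -> : (char_poly M)`_2 = 1.
  by have /monicP := char_poly_monic M; rewrite lead_coefE size_char_poly.
rewrite char_poly_det (char_poly_trace M) //= scale1r expr0 expr1.
rewrite sqrrN expr1n mul1r expr2 -mulmxE scalemx1 scaleNr => /eqP.
by rewrite addrC addr_eq0 opprD opprK => /eqP ->; rewrite addrC.
Qed.

Section CommutingInvolutions.
Variable R : idomainType.
Hypothesis two_neq0 : 2 != 0 :> R.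

Lemma commuting_involutions2 (A B : 'M[R]_2) :
  A *m A = 1%:M -> B *m B = 1%:M -> A *m B = B *m A -> \tr A = \tr B ->
  B = A \/ B = - A.
Proof.
move=> AA BB AB trAB; set D := A - B.
have DD : D *m D = 2 *: (1%:M - A *m B).
  rewrite mulmxBl !mulmxBr AA BB -AB scaler_nat mulr2n.
  by rewrite opprB addrA -[_ - _ + _]addrA addrC.
have DS : D *m (A + B) = 0.
  by rewrite mulmxBl !mulmxDr AA BB AB opprD addrA addrK subrr.
have trD : \tr D = 0.
  by apply/eqP; rewrite (raddfB (@mxtrace _ 2)) subr_eq0; apply/eqP.
have [detD0|detD_neq0] := eqVneq (\det D) 0.
  left; have : 2 *: (1%:M - A *m B) = 0.
    by rewrite -DD Cayley_Hamilton2 detD0 trD scale0r -scalemx1 scale0r subrr.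
  move/eqP; rewrite scalemx_eq0 (negPf two_neq0) subr_eq0 /= => /eqP AB1.
  by rewrite -[B]mul1mx -AA -mulmxA -AB1 mulmx1.
right; have : \det D *: (A + B) = 0.
  by rewrite -mul_scalar_mx -mul_adj_mx -mulmxA DS mulmx0.
by move/eqP; rewrite scalemx_eq0 (negPf detD_neq0) addrC addr_eq0 => /eqP.
Qed.

Lemma commuting_affine_involutions2 (A B : 'M[R]_2) s t :
  affmx A s *m affmx A s = 1%:M -> affmx B t *m affmx B t = 1%:M ->
  affmx A s *m affmx B t = affmx B t *m affmx A s ->
  \tr (affmx A s) = \tr (affmx B t) -> affmx B t = affmx A s \/ B = - A.
Proof.
move=> /affmx_sqr_eq1[AA As] /affmx_sqr_eq1[BB Bt].
rewrite !mul_affmx !mxtrace_affmx => /affmx_inj[AB st] /addIr trAB.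
have [BA|] := commuting_involutions2 AA BB AB trAB; last by right.
left; subst B; congr affmx; have : 2 *: (t - s) = 0.
  rewrite scaler_nat -[RHS](subrr (A *m s + t)) -{2}st As Bt.
  by rewrite mulr2n opprD opprK [- s + t]addrC.
by move/eqP; rewrite scalemx_eq0 (negPf two_neq0) subr_eq0 => /eqP.
Qed.

End CommutingInvolutions.

Section FirstBasisEigenvector.
Variables (R : comPzRingType) (n : nat).
Implicit Types A B : 'M[R]_n.+1.

Definition e0_eigen A : Prop := col 0 A = A 0 0 *: delta_mx 0 0.

Lemma col0_mul_e0_eigen A B :
  e0_eigen A -> e0_eigen B -> col 0 (A *m B) = (A 0 0 * B 0 0) *: delta_mx 0 0.
Proof.
move=> eA eB; rewrite colE -mulmxA -colE eB -scalemxAr -colE eA.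
by rewrite scalerA mulrC.
Qed.

Lemma mxE00_mul_e0_eigen A B :
  e0_eigen A -> e0_eigen B -> (A *m B) 0 0 = A 0 0 * B 0 0.
Proof.
move=> eA eB; have /matrixP/(_ 0 0) := col0_mul_e0_eigen eA eB.
by rewrite !mxE eqxx mulr1.
Qed.

Lemma e0_eigenM A B : e0_eigen A -> e0_eigen B -> e0_eigen (A *m B).
Proof.
by move=> eA eB; rewrite /e0_eigen col0_mul_e0_eigen // mxE00_mul_e0_eigen.
Qed.

End FirstBasisEigenvector.

(* On ~W, chi3 is a linear character with chi3 r1 = -1 and
   chi3 r2 = chi3 r3 = 1. *)
Definition chi3 (g : 'M[int]_3) : 'F_3 := (g 0 0)%:~R.

Definition e0_stable_mod3 (g : 'M[int]_3) : Prop :=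
  e0_eigen (map_mx intr g : 'M['F_3]_3) /\ chi3 g != 0.

Lemma chi3_affmx (A : 'M[int]_2) t : chi3 (affmx A t) = (A 0 0)%:~R.
Proof. exact: (congr1 intr (affmx00 A t)). Qed.

Lemma chi3M g h :
  e0_stable_mod3 g -> e0_stable_mod3 h -> chi3 (g *m h) = chi3 g * chi3 h.
Proof.
move=> [eg _] [eh _]; have := mxE00_mul_e0_eigen eg eh.
by rewrite -map_mxM !mxE /chi3 mxE.
Qed.

Lemma e0_stable_mod3M g h :
  e0_stable_mod3 g -> e0_stable_mod3 h -> e0_stable_mod3 (g *m h).
Proof.
move=> sg sh; split.
  by rewrite map_mxM; apply: e0_eigenM; [case: sg | case: sh].
by rewrite chi3M // mulf_neq0 //; [case: sg | case: sh].
Qed.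

Definition G2_generator (r : 'M[int]_3) : Prop := [\/ r = r1, r = r2 | r = r3].

Lemma G2_generator_inWG2 r : G2_generator r -> inWG2 r.
Proof. by case=> ->; constructor. Qed.

Lemma G2_generator_sqr r : G2_generator r -> r *m r = 1%:M.
Proof.
case=> ->; apply/matrixP => i j;
  rewrite /r1 /r2 /r3 /mx3 !mxE !big_ord_recl big_ord0 !mxE /=;
  case: i => [[|[|[|//]]] ?]; case: j => [[|[|[|//]]] ?]; reflexivity.
Qed.

Lemma G2_generator_affine r :
  G2_generator r -> exists (A : 'M[int]_2) (t : 'cV_2), r = affmx A t.
Proof.
move=> gr; exists (ulsubmx (r : 'M_(2 + 1))), (ursubmx (r : 'M_(2 + 1))).
apply: (@affmx_submxK _ 2); apply/matrixP => i j; rewrite !mxE !ord1 /=;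
  case: gr => ->; rewrite /r1 /r2 /r3 /mx3 !mxE //=.
all: by case: j => [[|[|//]] ?].
Qed.

Lemma G2_generator_e0_stable_mod3 r : G2_generator r -> e0_stable_mod3 r.
Proof.
case=> ->; split; rewrite /chi3 /r1 /r2 /r3 /mx3 ?mxE //=;
  apply/matrixP => i j; rewrite !mxE !ord1 /=;
  by case: i => [[|[|[|//]]] ?]; rewrite /= ?mulr1 ?mulr0; apply/eqP.
Qed.

(* Closure under inverses comes for free: the generators are involutions, so
   the inverse of a product of generators is the reversed product. *)
Lemma inWG2_monoid_ind (P : 'M[int]_3 -> Prop) :
  P 1%:M -> (forall r, G2_generator r -> P r) ->
  (forall g h, P g -> P h -> P (g *m h)) ->
  forall g, inWG2 g -> P g.
Proof.
move=> P1 Pgen PM.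
suff PW : forall g, inWG2 g -> P g /\ exists2 g', P g' & g' *m g = 1%:M.
  by move=> g /PW[].
have Pr r : G2_generator r -> P r /\ exists2 r', P r' & r' *m r = 1%:M.
  by move=> gr; split; [|exists r; [|exact: G2_generator_sqr]]; apply: Pgen.
move=> ?; elim => [|||| g h _ [Pg [g' Pg' g'g]] _ [Ph [h' Ph' h'h]]
              | g _ [Pg [g' Pg' g'g]]].
- by split => //; exists 1%:M; rewrite ?mulmx1.
- exact/Pr/Or31.
- exact/Pr/Or32.
- exact/Pr/Or33.
- split; first exact: PM.
  by exists (h' *m g'); [exact: PM | rewrite mulmxA -(mulmxA h') g'g mulmx1].
by rewrite (invmx_left g'g); split => //; exists g => //; apply: mulmx1C g'g.
Qed.

Lemma inWG2_unit g : inWG2 g -> g \in unitmx.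
Proof.
move: g; apply: inWG2_monoid_ind.
- exact: unitmx1.
- by move=> r /G2_generator_sqr/mulmx1_unit[].
- by move=> g h gU hU; rewrite unitmx_mul gU.
Qed.

Lemma inWG2_affine g :
  inWG2 g -> exists (A : 'M[int]_2) (t : 'cV_2), g = affmx A t.
Proof.
move: g; apply: inWG2_monoid_ind => [|r /G2_generator_affine //|].
  by exists 1%:M, 0; rewrite (affmx1 _ 2).
move=> g h [A [t ->]] [B [s ->]].
by exists (A *m B), (A *m s + t); exact: (mul_affmx A t B s).
Qed.

Lemma inWG2_e0_stable_mod3 g : inWG2 g -> e0_stable_mod3 g.
Proof.
move: g; apply: inWG2_monoid_ind.
- split; rewrite /chi3 ?mxE //=.
  by apply/matrixP => i j; rewrite map_mx1 !mxE !ord1 eqxx andbT mul1r.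
- exact: G2_generator_e0_stable_mod3.
- exact: e0_stable_mod3M.
Qed.

Lemma conj_class_invariants x u : inWG2 x -> x *m x = 1%:M -> conj_class x u ->
  [/\ inWG2 u, u *m u = 1%:M, \tr u = \tr x & chi3 u = chi3 x].
Proof.
move=> Wx xx [h Wh ->]; have hU := inWG2_unit Wh; have Wh' := inWG2_inv Wh.
have sh' := inWG2_e0_stable_mod3 Wh'; have sh := inWG2_e0_stable_mod3 Wh.
have sx := inWG2_e0_stable_mod3 Wx.
split.
- by apply/inWG2_mul/Wh/inWG2_mul.
- by rewrite !mulmxA (mulmxK hU) -(mulmxA _ x x) xx mulmx1 mulVmx.
- by rewrite mxtrace_mulC mulmxA mulmxV // mul1mx.
have sh'x := e0_stable_mod3M sh' sx.
rewrite !chi3M // mulrAC -chi3M // mulVmx // /chi3 mxE eqxx mulr1n.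
by rewrite rmorph1 mul1r.
Qed.

Lemma G2_commuting_involutions_eq u v : inWG2 u -> inWG2 v ->
  u *m u = 1%:M -> v *m v = 1%:M -> u *m v = v *m u ->
  \tr u = \tr v -> chi3 u = chi3 v -> u = v.
Proof.
move=> Wu Wv; have [_] := inWG2_e0_stable_mod3 Wu.
have [A [s ->]] := inWG2_affine Wu; have [B [t ->]] := inWG2_affine Wv.
move=> chiA_neq0 uu vv uv truv chi_uv.
have [-> //|BA] :=
  commuting_affine_involutions2 (erefl : 2 != 0 :> int) uu vv uv truv.
move: chiA_neq0 chi_uv; rewrite !chi3_affmx BA mxE mulrNz => /negPf chiA0 /eqP.
by rewrite -addr_eq0 -mulr2n -mulr_natl mulf_eq0 chiA0 orbF.
Qed.

Lemma conj_class_no_edge x : is_involution x ->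
  forall u v, conj_class x u -> conj_class x v -> ~ cig_adj u v.
Proof.
move=> [Wx [xx _]] u v /(conj_class_invariants Wx xx)[Wu uu tru chiu].
move=> /(conj_class_invariants Wx xx)[Wv vv trv chiv] [u_neq_v uv].
by apply: u_neq_v; apply: G2_commuting_involutions_eq => //; congruence.
Qed.

Lemma mx3_eta (x : 'M[int]_3) :
  x = mx3 [:: [:: x 0 0; x 0 1; x 0 2]; [:: x 1 0; x 1 1; x 1 2];
              [:: x 2 0; x 2 1; x 2 2]].
Proof.
apply/matrixP => i j; rewrite mxE.
by case: i j => [[|[|[|//]]] ?] [[|[|[|//]]] ?]; congr (x _ _); apply: val_inj.
Qed.

Lemma mulmx3E (A B : 'M[int]_3) i j :
  (A *m B) i j = A i 0 * B 0 j + A i 1 * B 1 j + A i 2 * B 2 j.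
Proof.
rewrite mxE !big_ord_recl big_ord0 addr0 addrA.
have -> : lift ord0 ord0 = 1 :> 'I_3 by apply: val_inj.
by have -> : lift ord0 (lift ord0 ord0) = 2 :> 'I_3 by apply: val_inj.
Qed.

Lemma commute_generators_scalar (x : 'M[int]_3) :
  x *m r1 = r1 *m x -> x *m r2 = r2 *m x -> x *m r3 = r3 *m x ->
  exists c, x = c%:M.
Proof.
move=> /matrixP E1 /matrixP E2 /matrixP E3.
move: (E1 0 0) (E1 0 1) (E1 0 2) (E1 1 0) (E1 1 1) (E1 1 2).
move: (E1 2 0) (E1 2 1) (E1 2 2) (E2 0 0) (E2 0 1) (E2 0 2).
move: (E2 1 0) (E2 1 1) (E2 1 2) (E2 2 0) (E2 2 1) (E2 2 2).
move: (E3 0 0) (E3 0 1) (E3 0 2) (E3 1 0) (E3 1 1) (E3 1 2).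
move: (E3 2 0) (E3 2 1) (E3 2 2).
rewrite !mulmx3E /r1 /r2 /r3 /mx3 !mxE /= => *.
exists (x 0 0); rewrite [LHS]mx3_eta; apply/matrixP => i j; rewrite !mxE.
by case: i j => [[|[|[|//]]] ?] [[|[|[|//]]] ?] /=; lia.
Qed.

Lemma inWG2_conj_generators_eq1 x : inWG2 x ->
  (forall r, G2_generator r -> invmx r *m x *m r = x) -> x = 1%:M.
Proof.
move=> Wx fixed.
have comm r : G2_generator r -> x *m r = r *m x.
  move=> gr; have rr := G2_generator_sqr gr.
  by rewrite -{1}(fixed r gr) (invmx_left rr) -!mulmxA rr mulmx1.
have [c xc] := commute_generators_scalar (comm _ (Or31 _ _ erefl))
  (comm _ (Or32 _ _ erefl)) (comm _ (Or33 _ _ erefl)).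
have [A [t xA]] := inWG2_affine Wx; rewrite xA.
exact: (@scalar_affmx _ 2 A t c (etrans (esym xA) xc)).
Qed.

Lemma cig_walk_edgeless (X : 'M[int]_3 -> Prop) u v :
  (forall u v, X u -> X v -> ~ cig_adj u v) -> cig_walk X u v -> u = v.
Proof.
move=> no_edge [//|u' w v' Xu' u'w walk].
by case: (no_edge u' w Xu' _ u'w); case: walk.
Qed.

Theorem proposition3p2 (x : 'M[int]_3) :
  is_involution x -> ~ cig_connected (conj_class x).
Proof.
move=> invx [_ connected]; have [Wx [_ x_neq1]] := invx.
apply/x_neq1/inWG2_conj_generators_eq1 => // r gr.
have Xx : conj_class x x.
  by exists 1%:M; [constructor | rewrite invmx1 mul1mx mulmx1].
have Xr : conj_class x (invmx r *m x *m r).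
  by exists r => //; apply: G2_generator_inWG2.
symmetry; apply: cig_walk_edgeless (conj_class_no_edge invx) _.
exact: connected _ _ Xx Xr.
Qed.
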